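(* Consider the Markov chain $\mathcal{G}$ described in the context, with parameters $r\ge1$, $p_c,p_1,\ldots,p_r\in[0,1]$. Let $s$ be any state of the form $s_i^\alpha$ or $c_i^\alpha$, and write $p_{\max}=\max\{p_1,\ldots,p_r\}$. If $p_c<1$ and $\eta:=r\cdot p_{\max}\cdot p_c<1$, then $\mathbb{E}[N(s)]$ is finite.
   Context: Fix an integer $r\ge 1$ and probabilities $p_c,p_1,\ldots,p_r\in[0,1]$. Words $\alpha\in\{1,\ldots,r\}^*$ (finite sequences, $\varepsilon$ the empty word, $\alpha\cdot i$ concatenation, $r^k$ the word of $k$ letters $r$) are called blocks. The Markov chain $\mathcal{G}$ has the countable state space $\{s_i^\alpha, c_i^\alpha : 1\le i\le r,\ \alpha\in\{1,\ldots,r\}^*\}\cup\{\sharp,\bot\}$, initial state $\sharp$, and the following transition probabilities (all unlisted transitions have probability $0$): $p(\sharp,s_1^\varepsilon)=p_c$, $p(\sharp,\bot)=1-p_c$; $p(s_i^\alpha,c_i^\alpha)=p_i$ for $1\le i\le r$; $p(s_i^\alpha,s_{i+1}^\alpha)=1-p_i$ for $1\le i<r$; $p(c_i^\alpha,s_1^{\alpha\cdot i})=p_c$ for $1\le i\le r$; $p(c_i^\alpha,s_{i+1}^\alpha)=1-p_c$ for $1\le i<r$; for every word of the form $\gamma=\beta\cdot i\cdot r^k$ with $1\le i<r$, $k\ge 0$: $p(s_r^{\gamma},s_{i+1}^\beta)=1-p_r$ and $p(c_r^{\gamma},s_{i+1}^\beta)=1-p_c$; for every $\gamma\in r^*$ (including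 $\varepsilon$): $p(s_r^\gamma,\bot)=1-p_r$, $p(c_r^\gamma,\bot)=1-p_c$; and $p(\bot,\bot)=1$. The block of $s_i^\alpha$ and of $c_i^\alpha$ is $\alpha$. For a block $\alpha$ let $E_\alpha=\{s_j^\beta : 1\le j\le r,\ \beta\text{ a proper prefix of }\alpha\}\cup\{\bot\}$. For a state $s$ with block $\alpha$, $N(s)$ is the hitting time $\inf\{n\ge 0: X_n\in E_\alpha\}$ of $E_\alpha$ for the chain $(X_n)$ started at $X_0=s$, i.e. the number of states visited from $s$ (including those in deeper blocks) before the block of $s$ is left upward. *)

From mathcomp Require Import all_boot all_order all_algebra.
From mathcomp Require Import all_classical all_reals all_analysis.
Set Implicit Arguments. Unset Strict Implicit. Unset Printing Implicit Defensive.
Import Order.TTheory GRing.Theory Num.Theory.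
Local Open Scope ring_scope.

(* States of the chain G: s_i^alpha, c_i^alpha, sharp, bot.
   Letters of blocks and indices are natural numbers; valid ones are in 1..r. *)
Inductive state : Type :=
| St : nat -> seq nat -> state
| Ct : nat -> seq nat -> state
| Sharp : state
| Bot : state.

(* The target of the "leave to the right" transitions out of s_r^gamma / c_r^gamma:
   if gamma = beta . i . r^k with i < r (i.e. i <> r) the target is s_{i+1}^beta,
   if gamma is in r^* the target is bot.  Argument b is rev gamma. *)
Fixpoint exit_rev (r : nat) (b : seq nat) : state :=
  match b with
  | [::] => Bot
  | j :: b' => if j == r then exit_rev r b' else St j.+1 (rev b')
  end.

Definition exit_state (r : nat) (gamma : seq nat) : state := exit_rev r (rev gamma).

Definition valid_block (r : nat) (a : seq nat) : bool := all (fun j => 0 < j <= r)%N a.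

(* The list of all transitions (target, probability) out of a state; every
   transition not listed has probability 0.  Transitions are listed only for
   valid states (indices in 1..r, blocks over {1..r}), exactly as in the paper. *)
Definition succ {R : realType} (r : nat) (pc : R) (ps : nat -> R) (x : state)
  : seq (state * R) :=
  match x with
  | Sharp => [:: (St 1 [::], pc); (Bot, 1 - pc)]
  | Bot => [:: (Bot, 1)]
  | St i a =>
      if (0 < i <= r)%N && valid_block r a then
        if (i < r)%N then [:: (Ct i a, ps i); (St i.+1 a, 1 - ps i)]
        else [:: (Ct i a, ps i); (exit_state r a, 1 - ps i)]
      else [::]
  | Ct i a =>
      if (0 < i <= r)%N && valid_block r a then
        if (i < r)%N then [:: (St 1 (rcons a i), pc); (St i.+1 a, 1 - pc)]
        else [:: (St 1 (rcons a i), pc); (exit_state r a, 1 - pc)]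
      else [::]
  end.

Definition block (x : state) : seq nat :=
  match x with St _ a | Ct _ a => a | _ => [::] end.

Definition is_block_state (r : nat) (x : state) : bool :=
  match x with
  | St i a | Ct i a => (0 < i <= r)%N && valid_block r a
  | _ => false
  end.

Definition in_E (r : nat) (alpha : seq nat) (x : state) : bool :=
  match x with
  | St j beta => (0 < j <= r)%N && prefix beta alpha && (size beta < size alpha)%N
  | Bot => true
  | _ => false
  end.

(* surv E n x = P_x(X_0, ..., X_n all outside E) = P_x(N > n) where N is the
   hitting time of E (defined by first-step recursion). *)
Fixpoint surv {R : realType} (r : nat) (pc : R) (ps : nat -> R)
  (E : state -> bool) (n : nat) (x : state) : R :=
  if E x then 0 else
  match n with
  | O => 1
  | n'.+1 => \sum_(e <- succ r pc ps x) e.2 * surv r pc ps E n' e.1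
  end.

(* E[N(s)] = \sum_{n >= 0} P(N(s) > n), in the extended reals. *)
Definition expected_N {R : realType} (r : nat) (pc : R) (ps : nat -> R)
  (s : state) : \bar R :=
  (\sum_(0 <= n <oo) (surv r pc ps (in_E r (block s)) n s)%:E)%E.

Definition pmax {R : realType} (r : nat) (ps : nat -> R) : R :=
  \big[Num.max/0]_(1 <= i < r.+1) ps i.

From mathcomp Require Import all_boot all_order all_algebra.
From mathcomp Require Import all_classical all_reals all_analysis.
From mathcomp Require Import lra.
Import Order.TTheory GRing.Theory Num.Theory.
Local Open Scope ring_scope.

(* Foster-Lyapunov argument.  If V >= 0 satisfies the drift inequality
   1 + sum_y p(x, y) V(y) <= V(x) at every state x <> bot, then every
   truncated sum sum_{k < n} P_x(N > k) is bounded by V(x), hence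
   E[N(s)] <= V(s) < oo.  Such a V charges u for each s-state still to be
   visited in the current block and in the blocks above it:
   V(s_i^alpha) = 1 + (r + 1 - i + sum_{j in alpha} (r - j)) u.  Drift at
   s_i^alpha then amounts to 1 + p_i (1 + p_c r u) <= u (a visit of c_i^alpha
   costs 1, plus with probability p_c a fresh block of r pending s-states),
   which u = (1 + p_max) / (1 - eta) satisfies because eta < 1. *)

Section WeightedSums.
Variables (R : realType) (T : Type).

Lemma weighted_sum_ler (l : seq (T * R)) (f g : T -> R) :
  all (fun e => 0 <= e.2) l -> (forall x, f x <= g x) ->
  \sum_(e <- l) e.2 * f e.1 <= \sum_(e <- l) e.2 * g e.1.
Proof.
move=> l_ge0 fg; elim: l l_ge0 => [|e l IH] /=; first by rewrite !big_nil.
case/andP=> e_ge0 l_ge0; rewrite !big_cons.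
by apply: lerD; [exact: ler_wpM2l | exact: IH].
Qed.

Lemma weighted_sum_ge0 (l : seq (T * R)) (f : T -> R) :
  all (fun e => 0 <= e.2) l -> (forall x, 0 <= f x) ->
  0 <= \sum_(e <- l) e.2 * f e.1.
Proof.
move=> l_ge0 f_ge0; have := weighted_sum_ler l (fun=> 0) f l_ge0 f_ge0.
by rewrite big1 // => e _; rewrite mulr0.
Qed.

End WeightedSums.

Section HittingTime.
Variables (R : realType) (r : nat) (pc : R) (ps : nat -> R).
Hypothesis pc01 : 0 <= pc <= 1.
Hypothesis ps01 : forall i, (1 <= i <= r)%N -> 0 <= ps i <= 1.

Lemma succ_weights_ge0 x : all (fun e => 0 <= e.2) (succ r pc ps x).
Proof.
have [pc0 pc1] := andP pc01.
case: x => [i a|i a||] /=; last 2 first.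
- by rewrite pc0 subr_ge0 pc1.
- by rewrite ler01.
all: case: ifP => [/andP[/ps01/andP[p0 p1] _]|_] //.
all: by case: ifP => _ /=; rewrite ?p0 ?pc0 subr_ge0 ?p1 ?pc1.
Qed.

Lemma surv_ge0 E n x : 0 <= surv r pc ps E n x.
Proof.
elim: n x => [|n IH] x /=; case: (E x) => //.
exact: weighted_sum_ge0 (succ_weights_ge0 x) IH.
Qed.

Definition surv_sum E n x := \sum_(k < n) surv r pc ps E k x.

Lemma surv_sumS E n x : surv_sum E n.+1 x =
  if E x then 0 else 1 + \sum_(e <- succ r pc ps x) e.2 * surv_sum E n e.1.
Proof.
rewrite /surv_sum big_ord_recl /=; case: (E x) => /=.
  by rewrite add0r big1.
congr (_ + _); rewrite exchange_big /=.
by apply: eq_bigr => e _; rewrite mulr_sumr.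
Qed.

Lemma surv_sum_le_lyapunov E (V : state -> R) :
  (forall x, 0 <= V x) ->
  (forall x, ~~ E x -> 1 + \sum_(e <- succ r pc ps x) e.2 * V e.1 <= V x) ->
  forall n x, surv_sum E n x <= V x.
Proof.
move=> V_ge0 drift; elim=> [|n IH] x; first by rewrite /surv_sum big_ord0.
rewrite surv_sumS; case: ifP => [_|/negbT Ex]; first exact: V_ge0.
apply: le_trans (drift x Ex); rewrite lerD2l.
exact: weighted_sum_ler (succ_weights_ge0 x) IH.
Qed.

Lemma expected_N_le_lyapunov (V : state -> R) s :
  (forall x, 0 <= V x) ->
  (forall x, ~~ in_E r (block s) x ->
     1 + \sum_(e <- succ r pc ps x) e.2 * V e.1 <= V x) ->
  (expected_N r pc ps s <= (V s)%:E)%E.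
Proof.
move=> V_ge0 drift; apply: lime_le.
  by apply: is_cvg_nneseries => n _ _; rewrite lee_fin surv_ge0.
apply: nearW => n; rewrite sumEFin lee_fin big_mkord.
exact: surv_sum_le_lyapunov.
Qed.

End HittingTime.

Section Lyapunov.
Variables (R : realType) (r : nat) (pc : R) (ps : nat -> R) (u : R).
Hypothesis pc01 : 0 <= pc <= 1.
Hypothesis ps01 : forall i, (1 <= i <= r)%N -> 0 <= ps i <= 1.
Hypothesis u_ge0 : 0 <= u.
Hypothesis drift_rate : forall i, (1 <= i <= r)%N -> 1 + ps i * (1 + pc * r%:R * u) <= u.

Definition pending (a : seq nat) : nat := sumn [seq (r - j)%N | j <- a].

Definition next_St (i : nat) (a : seq nat) : state :=
  if (i < r)%N then St i.+1 a else exit_state r a.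

Definition lyap (x : state) : R :=
  match x with
  | St i a => 1 + (r.+1 - i + pending a)%:R * u
  | Ct i a => 2 + pc * r%:R * u + (r - i + pending a)%:R * u
  | Sharp => 2 + r%:R * u
  | Bot => 0
  end.

Lemma pending_rcons a j : pending (rcons a j) = (pending a + (r - j))%N.
Proof. by rewrite /pending map_rcons sumn_rcons. Qed.

Lemma exit_state_rcons a j :
  exit_state r (rcons a j) = if j == r then exit_state r a else St j.+1 a.
Proof. by rewrite /exit_state rev_rcons /= revK. Qed.

Lemma pc_r_u_ge0 : 0 <= pc * r%:R * u.
Proof. by case/andP: pc01 => pc0 _; rewrite mulr_ge0 ?mulr_ge0. Qed.

Lemma lyap_ge1 x : x <> Bot -> 1 <= lyap x.
Proof.
have nat_u_ge0 k : 0 <= k%:R * u :> R by rewrite mulr_ge0.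
have := pc_r_u_ge0; case: x => [i a|i a||] // Q_ge0 _ /=.
- by rewrite lerDl.
- by have := nat_u_ge0 (r - i + pending a)%N; lra.
- by have := nat_u_ge0 r; lra.
Qed.

Lemma lyap_ge0 x : 0 <= lyap x.
Proof. by case: x => [i a|i a||] //; apply: le_trans ler01 (lyap_ge1 _ _). Qed.

Lemma lyap_exit_state a : lyap (exit_state r a) <= 1 + (pending a)%:R * u.
Proof.
elim/last_ind: a => [|a j IH]; first by rewrite /= mul0r addr0 ler01.
rewrite exit_state_rcons pending_rcons; case: eqP => [->|_].
  by rewrite subnn addn0.
by rewrite /= subSS addnC.
Qed.

Lemma lyap_next_St i a : (i <= r)%N ->
  lyap (next_St i a) <= 1 + (r - i + pending a)%:R * u.
Proof.
rewrite /next_St leq_eqVlt => /orP[/eqP->|ltir]; last by rewrite ltir /= subSS.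
by rewrite ltnn subnn add0n lyap_exit_state.
Qed.

Lemma succ_valid x : is_block_state r x ->
  succ r pc ps x =
  match x with
  | St i a => [:: (Ct i a, ps i); (next_St i a, 1 - ps i)]
  | Ct i a => [:: (St 1 (rcons a i), pc); (next_St i a, 1 - pc)]
  | _ => [::]
  end.
Proof. by case: x => // i a /= ->; rewrite /next_St; case: ifP. Qed.

Lemma lyap_drift_block x : is_block_state r x ->
  1 + \sum_(e <- succ r pc ps x) e.2 * lyap e.1 <= lyap x.
Proof.
move=> valid; rewrite succ_valid //; have Q_ge0 := pc_r_u_ge0.
case: x valid => // i a /andP[i_in _]; have [_ i_le_r] := andP i_in.
all: rewrite !big_cons big_nil addr0 /=.
all: have next_le := lyap_next_St i a i_le_r.
all: set W := (r - i + pending a)%:R * u in next_le *.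
- have /andP[p0 p1] := ps01 i i_in.
  have := drift_rate i i_in.
  rewrite subSn // addSn -[(_ + _).+1]addn1 natrD [(_ + 1) * u]mulrDl mul1r -/W.
  set Q := pc * r%:R * u in Q_ge0 *; set N := lyap _ in next_le *.
  have : 0 <= (1 - ps i) * (1 + W - N) by rewrite mulr_ge0 ?subr_ge0 // lerBrDl.
  nra.
- have [pc0 pc1] := andP pc01.
  rewrite subSS subn0 pending_rcons [(pending a + _)%N]addnC natrD mulrDl -/W.
  rewrite -!mulrA in Q_ge0 *; set A := r%:R * u in Q_ge0 *.
  set N := lyap _ in next_le *.
  have : 0 <= (1 - pc) * (1 + W - N) by rewrite mulr_ge0 ?subr_ge0 // lerBrDl.
  nra.
Qed.

Lemma lyap_drift x : x <> Bot ->
  1 + \sum_(e <- succ r pc ps x) e.2 * lyap e.1 <= lyap x.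
Proof.
move=> xNBot; have [valid|invalid] := boolP (is_block_state r x).
  exact: lyap_drift_block.
case: x xNBot invalid => [i a|i a||] // xNBot invalid; last first.
  have [pc0 pc1] := andP pc01; have ru_ge0 : 0 <= r%:R * u by rewrite mulr_ge0.
  rewrite /= !big_cons big_nil /= subSS subn0 addn0 mulr0 !addr0.
  by set A := r%:R * u in ru_ge0 *; nra.
all: move: invalid (lyap_ge1 _ xNBot) => /negbTE /= invalid.
all: by rewrite invalid big_nil addr0.
Qed.

End Lyapunov.

Lemma pmax_ge {R : realType} {r i : nat} (ps : nat -> R) :
  (1 <= i <= r)%N -> ps i <= pmax r ps.
Proof. by move=> i_in; apply: le_bigmax_seq; rewrite ?mem_index_iota. Qed.

Lemma pmax_ge0 (R : realType) r (ps : nat -> R) : 0 <= pmax r ps.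
Proof. exact: bigmax_ge_id. Qed.

Lemma exists_drift_rate {R : realType} {r : nat} {pc : R} {ps : nat -> R} :
  0 <= pc -> r%:R * pmax r ps * pc < 1 ->
  exists2 u, 0 <= u &
    forall i, (1 <= i <= r)%N -> 1 + ps i * (1 + pc * r%:R * u) <= u.
Proof.
move=> pc0 eta_lt1; set m := pmax r ps in eta_lt1.
have m_ge0 : 0 <= m := pmax_ge0 R r ps.
have den_gt0 : 0 < 1 - r%:R * m * pc by rewrite subr_gt0.
(* u is the fixed point of u = 1 + m (1 + pc r u) *)
pose u := (1 + m) / (1 - r%:R * m * pc).
have u_ge0 : 0 <= u by apply: divr_ge0; [exact: addr_ge0 | exact: ltW].
have u_eq : u * (1 - r%:R * m * pc) = 1 + m by rewrite divfK ?gt_eqF.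
exists u => // i i_in; clearbody u.
have Q_ge0 : 0 <= 1 + pc * r%:R * u by rewrite addr_ge0 ?mulr_ge0.
have := ler_wpM2r Q_ge0 (pmax_ge ps i_in); rewrite -/m.
set q := r%:R in u_eq Q_ge0 *; nra.
Qed.

Theorem lemma3p3 (R : realType) (r : nat) (pc : R) (ps : nat -> R) (s : state) :
  (1 <= r)%N ->
  0 <= pc <= 1 ->
  (forall i, (1 <= i <= r)%N -> 0 <= ps i <= 1) ->
  is_block_state r s ->
  pc < 1 ->
  r%:R * pmax r ps * pc < 1 ->
  (expected_N r pc ps s < +oo)%E.
Proof.
move=> _ pc01 ps01 _ _ eta_lt1; have [pc0 _] := andP pc01.
have [u u_ge0 rate] := exists_drift_rate pc0 eta_lt1.
apply: le_lt_trans (ltry (lyap _ r pc u s)).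
apply: expected_N_le_lyapunov => // [x|x xNE]; first exact: lyap_ge0.
have xNBot : x <> Bot by move=> xB; rewrite xB in xNE.
exact: lyap_drift.
Qed.
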